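(* Under the setting and assumptions in the context, let $N_{AH}=\Pr(R=0,Y=1\mid Z=0)-\Pr(R=0,Y=1\mid Z=1)$ and suppose $N_{AH}\ge 0$ and $\max_{z}\Pr(R=0,Y=1\mid Z=z)>0$. Then $$\frac{N_{AH}}{\min_z\Pr(Y=1\mid Z=z)}\ \le\ APCE_{AH}\ \le\ \frac{N_{AH}}{\max_z\Pr(R=0,Y=1\mid Z=z)},$$ where maxima and minima are over $z\in\{0,1\}$.
   Context: Units are drawn from a population (a probability space). Each unit has a binary assignment $Z\in\{0,1\}$ with $0<\Pr(Z=1)<1$, binary potential recommendations $R(0),R(1)\in\{0,1\}$, and binary potential outcomes $Y(0),Y(1)\in\{0,1\}$ indexed by the recommendation only (exclusion restriction). Observed quantities are $R=R(Z)$ and $Y=Y(R(Z))$. Assumptions: (Randomization) $Z$ is independent of $(R(0),R(1),Y(0),Y(1))$; (Monotonicity) $Y(1)\ge Y(0)$ almost surely. Always High stratum $AH=\{Y(0)=Y(1)=1\}$; $APCE_{AH}=E[R(1)-R(0)\mid AH]$. *)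

From HB Require Import structures.
From mathcomp Require Import all_boot all_order all_algebra.
From mathcomp Require Import all_classical all_reals all_analysis.
Set Implicit Arguments. Unset Strict Implicit. Unset Printing Implicit Defensive.
Import Order.TTheory GRing.Theory Num.Theory.
Local Open Scope classical_set_scope.
Local Open Scope ring_scope.

Section Defs.
Context {R : realType} {d : measure_display} {Omega : measurableType d}.
Variable P : probability Omega R.

Definition Pr (A : set Omega) : R := fine (P A).

Definition condPr (A B : set Omega) : R := Pr (A `&` B) / Pr B.

Definition condE (f : Omega -> R) (B : set Omega) : R :=
  Rintegral P B f / Pr B.

Definition indep_Z_V (Z R0 R1 Y0 Y1 : Omega -> bool) : Prop :=
  forall (z r0 r1 y0 y1 : bool),
    Pr [set w | Z w = z /\ (R0 w, R1 w, Y0 w, Y1 w) = (r0, r1, y0, y1)]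
    = Pr [set w | Z w = z] * Pr [set w | (R0 w, R1 w, Y0 w, Y1 w) = (r0, r1, y0, y1)].

End Defs.

Definition obsR {T : Type} (Z R0 R1 : T -> bool) : T -> bool :=
  fun w => if Z w then R1 w else R0 w.
Definition obsY {T : Type} (Z R0 R1 Y0 Y1 : T -> bool) : T -> bool :=
  fun w => if obsR Z R0 R1 w then Y1 w else Y0 w.
Definition AH {T : Type} (Y0 Y1 : T -> bool) : set T := fun w => Y0 w /\ Y1 w.

From HB Require Import structures.
From mathcomp Require Import all_boot all_order all_algebra.
From mathcomp Require Import all_classical all_reals all_analysis.
From mathcomp Require Import lra.
Set Implicit Arguments. Unset Strict Implicit. Unset Printing Implicit Defensive.
Import Order.TTheory GRing.Theory Num.Theory.
Local Open Scope classical_set_scope.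
Local Open Scope ring_scope.

(* By randomization, conditioning on Z = z only fixes which potential
   recommendation R(z) is observed.  On {R(z) = 0} the observed outcome is Y(0), and by
   monotonicity Y(0) = 1 forces Y(1) = 1 outside a null set, so
   Pr(R = 0, Y = 1 | Z = z) = Pr(AH, R(z) = 0).  Writing Pr(AH) as the sum of
   Pr(AH, R(z) = 0) and Pr(AH, R(z) = 1) for z = 0 and z = 1 gives
   N_AH = Pr(AH, R(1) = 1) - Pr(AH, R(0) = 1), that is APCE_AH = N_AH / Pr(AH) exactly.
   The bounds follow because Pr(R = 0, Y = 1 | Z = z) <= Pr(AH) <= Pr(Y = 1 | Z = z). *)

Lemma ler_wpdivl2l {F : numFieldType} (x y z : F) :
  0 <= x -> 0 < y -> y <= z -> x / z <= x / y.
Proof.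
move=> x_ge0 y_gt0 le_yz; rewrite ler_wpM2l // lef_pV2 ?posrE //.
exact: lt_le_trans le_yz.
Qed.

Lemma indic_boolE {T : Type} {R : pzRingType} (b : T -> bool) w :
  \1_[set w | b w] w = (b w)%:R :> R.
Proof.
by rewrite indicE; have -> : (w \in [set w | b w]) = b w by apply/idP/idP; rewrite in_setE.
Qed.

Lemma measurable_bool_eq {d : measure_display} {T : measurableType d}
  (b : T -> bool) c : measurable [set w | b w] -> measurable [set w | b w = c].
Proof.
case: c => // mb; rewrite (_ : [set w | _] = ~` [set w | b w]); first exact: measurableC.
by apply/seteqP; split => w /=; case: (b w).
Qed.

Section Probability.
Context {R : realType} {d : measure_display} {Omega : measurableType d}.
Variable P : probability Omega R.

Lemma PrE A : measurable A -> ((Pr P A)%:E = P A)%E.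
Proof. by move=> mA; rewrite /Pr fineK // fin_num_measure. Qed.

Lemma Pr_ge0 A : 0 <= Pr P A.
Proof. exact: fine_ge0. Qed.

Lemma le_Pr A B : measurable A -> measurable B -> A `<=` B -> Pr P A <= Pr P B.
Proof. by move=> mA mB AB; rewrite -lee_fin !PrE //; apply: le_measure; rewrite ?inE. Qed.

Lemma Pr_set0 : Pr P set0 = 0.
Proof. by rewrite /Pr measure0. Qed.

Lemma PrU A B : measurable A -> measurable B -> A `&` B = set0 ->
  Pr P (A `|` B) = Pr P A + Pr P B.
Proof. by move=> mA mB AB0; rewrite /Pr measureU // fineD // fin_num_measure. Qed.

Lemma Pr_setIC A B : measurable A -> measurable B ->
  Pr P A = Pr P (A `&` B) + Pr P (A `&` ~` B).
Proof.
move=> mA mB; rewrite -PrU; first by rewrite -setIUr setUCr setIT.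
- exact: measurableI.
- exact/measurableI/measurableC.
- by rewrite setIACA setICr !setI0.
Qed.

Lemma Pr_setC A : measurable A -> Pr P (~` A) = 1 - Pr P A.
Proof. by move=> mA; rewrite /Pr probability_setC // fineB // fin_num_measure. Qed.

Lemma Pr_setI_setC_null A N : measurable A -> measurable N -> Pr P N = 0 ->
  Pr P A = Pr P (A `&` ~` N).
Proof.
move=> mA mN PN0; rewrite (Pr_setIC mA mN) -[RHS]add0r; congr (_ + _).
apply/eqP; rewrite eq_le Pr_ge0 andbT -PN0.
by apply: le_Pr => //; exact: measurableI.
Qed.

Lemma Pr_negligible A : measurable A -> P.-negligible A -> Pr P A = 0.
Proof. by move=> mA /(negligibleP _ mA) PA0; rewrite /Pr PA0. Qed.

Lemma Rintegral_bool (b : Omega -> bool) D :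
  measurable [set w | b w] -> measurable D ->
  Rintegral P D (fun w => (b w)%:R) = Pr P ([set w | b w] `&` D).
Proof.
move=> mb mD; rewrite /Rintegral /Pr -integral_indic //; congr fine.
by apply: eq_integral => w _; rewrite indic_boolE.
Qed.

Lemma integrable_bool (b : Omega -> bool) D :
  measurable [set w | b w] -> measurable D ->
  P.-integrable D (EFin \o (fun w => (b w)%:R)).
Proof.
move=> mb mD; apply: (integrableS measurableT) => //.
rewrite (_ : _ \o _ = fun w => (\1_[set w | b w] w)%:E); first exact: integrable_indic.
by apply: funext => w /=; rewrite indic_boolE.
Qed.

End Probability.

Section FiniteRandomVariable.
Context {R : realType} {d : measure_display} {Omega : measurableType d}.
Variables (P : probability Omega R) (T : finType) (V : Omega -> T).
Hypothesis mV : forall v, measurable [set w | V w = v].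

Lemma measurable_memV (s : seq T) : measurable [set w | V w \in s].
Proof.
elim: s => [|v s IHs].
  by rewrite (_ : [set w | _] = set0) //; apply/seteqP; split => w.
rewrite (_ : [set w | _] = [set w | V w = v] `|` [set w | V w \in s]).
  exact: measurableU.
apply/seteqP; split => w /=; rewrite in_cons; first by case/predU1P; [left | right].
by case=> [->|->]; rewrite ?eqxx ?orbT.
Qed.

Lemma measurable_predV (S : pred T) : measurable [set w | S (V w)].
Proof.
rewrite (_ : [set w | _] = [set w | V w \in enum S]); first exact: measurable_memV.
by apply/seteqP; split => w /=; rewrite mem_enum.
Qed.

Lemma Pr_setI_memV A (s : seq T) : measurable A -> uniq s ->
  Pr P (A `&` [set w | V w \in s]) = \sum_(v <- s) Pr P (A `&` [set w | V w = v]).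
Proof.
move=> mA; elim: s => [_|v s IHs /= /andP[vNs uniq_s]].
  by rewrite big_nil -(Pr_set0 P); congr Pr; apply/seteqP; split => w [].
rewrite big_cons -IHs // -PrU.
- congr Pr; apply/seteqP; split => w /=; rewrite in_cons.
    by case=> Aw /predU1P[]; [left | right].
  by case=> -[Aw ->]; rewrite ?eqxx ?orbT.
- exact: measurableI.
- exact/measurableI/measurable_memV.
- by apply/seteqP; split => w // [[_ /= ->] [_]]; rewrite (negbTE vNs).
Qed.

Lemma Pr_setI_predV A (S : pred T) : measurable A ->
  Pr P (A `&` [set w | S (V w)]) = \sum_(v in S) Pr P (A `&` [set w | V w = v]).
Proof.
move=> mA; rewrite -big_enum -Pr_setI_memV ?enum_uniq //.
by congr Pr; apply/seteqP; split => w /=; rewrite mem_enum.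
Qed.

Lemma Pr_indep_predV B (S : pred T) : measurable B ->
  (forall v, Pr P (B `&` [set w | V w = v]) = Pr P B * Pr P [set w | V w = v]) ->
  Pr P (B `&` [set w | S (V w)]) = Pr P B * Pr P [set w | S (V w)].
Proof.
move=> mB indepB; rewrite -[in RHS](setTI [set w | S (V w)]) !Pr_setI_predV //.
by rewrite mulr_sumr; apply: eq_bigr => v _; rewrite setTI indepB.
Qed.

Lemma condPr_indep_predV B (S : pred T) : measurable B -> 0 < Pr P B ->
  (forall v, Pr P (B `&` [set w | V w = v]) = Pr P B * Pr P [set w | V w = v]) ->
  condPr P [set w | S (V w)] B = Pr P [set w | S (V w)].
Proof.
move=> mB PB_gt0 indepB; rewrite /condPr setIC Pr_indep_predV //.
by rewrite mulrAC divff ?mul1r ?gt_eqF.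
Qed.

End FiniteRandomVariable.

(* A value v of the vector (R(0), R(1), Y(0), Y(1)): [rec_at v z] is R(z) and
   [out_at v r] is Y(r). *)
Definition potentials := (bool * bool * bool * bool)%type.
Definition rec_at (v : potentials) (z : bool) : bool := if z then v.1.1.2 else v.1.1.1.
Definition out_at (v : potentials) (r : bool) : bool := if r then v.2 else v.1.2.
Definition always_high (v : potentials) : bool := v.1.2 && v.2.

Section Encouragement.
Context {R : realType} {d : measure_display} {Omega : measurableType d}.
Context {P : probability Omega R} {Z R0 R1 Y0 Y1 : Omega -> bool}.
Hypotheses (mZ : measurable [set w | Z w]) (mR0 : measurable [set w | R0 w])
  (mR1 : measurable [set w | R1 w]) (mY0 : measurable [set w | Y0 w])
  (mY1 : measurable [set w | Y1 w]).
Hypothesis hZ : 0 < Pr P [set w | Z w] < 1.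
Hypothesis hrand : indep_Z_V P Z R0 R1 Y0 Y1.
Hypothesis hmono : {ae P, forall w, Y0 w ==> Y1 w}.

Let V w : potentials := (R0 w, R1 w, Y0 w, Y1 w).

Let measurable_V v : measurable [set w | V w = v].
Proof.
case: v => [[[r0 r1] y0] y1].
rewrite (_ : [set w | _] = [set w | R0 w = r0] `&` [set w | R1 w = r1] `&`
   [set w | Y0 w = y0] `&` [set w | Y1 w = y1]).
  by repeat apply: measurableI; apply: measurable_bool_eq.
by apply/seteqP; split => w /=; [case=> <- <- <- <- | case=> [[[<- <-] <-] <-]].
Qed.

Let mS (S : pred potentials) : measurable [set w | S (V w)] := measurable_predV measurable_V S.

Lemma PrZ_gt0 z : 0 < Pr P [set w | Z w = z].
Proof.
case: z; first by case/andP: hZ.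
rewrite (_ : [set w | _] = ~` [set w | Z w]); last first.
  by apply/seteqP; split => w /=; case: (Z w).
by rewrite Pr_setC // subr_gt0; case/andP: hZ.
Qed.

Lemma condPr_given_Z (f : bool -> potentials -> bool) z :
  condPr P [set w | f (Z w) (V w)] [set w | Z w = z] = Pr P [set w | f z (V w)].
Proof.
have mZz := measurable_bool_eq z mZ.
rewrite -(condPr_indep_predV measurable_V (f z) mZz (PrZ_gt0 z)); last first.
  by move=> [[[r0 r1] y0] y1]; exact: hrand.
by rewrite /condPr; congr (Pr P _ / _); apply/seteqP; split => w /= [fw Zw]; rewrite -Zw in fw *.
Qed.

Lemma Pr_Y0_notY1 : Pr P [set w | Y0 w && ~~ Y1 w] = 0.
Proof.
apply: (Pr_negligible (mS (fun v => v.1.2 && ~~ v.2))).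
by apply: negligibleS hmono => w /= /andP[-> /negbTE ->].
Qed.

Let pRY z := condPr P
  [set w | obsR Z R0 R1 w = false /\ obsY Z R0 R1 Y0 Y1 w = true] [set w | Z w = z].

Lemma AH_always_high : AH Y0 Y1 = [set w | always_high (V w)].
Proof. by apply/seteqP; split => w; rewrite /= /always_high /=; [case=> -> -> | case/andP]. Qed.

Lemma pRY_AH z :
  pRY z = Pr P ([set w | always_high (V w)] `&` ~` [set w | rec_at (V w) z]).
Proof.
pose noncompliant_Y1 z v := ~~ rec_at v z && out_at v (rec_at v z).
rewrite /pRY (_ : [set w | _ /\ _] = [set w | noncompliant_Y1 (Z w) (V w)]); last first.
  apply/seteqP; split => w /=; rewrite /obsY /obsR /noncompliant_Y1 /rec_at /out_at /=.
    by case=> -> ->.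
  by case: (Z w) (R0 w) (R1 w) => [] [] [].
rewrite condPr_given_Z (Pr_setI_setC_null (mS _) (mS (fun v => v.1.2 && ~~ v.2)) Pr_Y0_notY1).
congr Pr; apply/seteqP; split => w /=; rewrite /noncompliant_Y1 /always_high /rec_at /out_at /=;
  by case: z (R0 w) (R1 w) (Y0 w) (Y1 w) => [] [] [] [] []; firstorder.
Qed.

Lemma pRY_le_PrAH z : pRY z <= Pr P (AH Y0 Y1).
Proof.
rewrite pRY_AH AH_always_high; apply: le_Pr => //.
exact/measurableI/measurableC/(mS (rec_at^~ z)).
Qed.

Lemma PrAH_le_pY z :
  Pr P (AH Y0 Y1) <= condPr P [set w | obsY Z R0 R1 Y0 Y1 w = true] [set w | Z w = z].
Proof.
pose outcome z v := out_at v (rec_at v z).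
have -> : [set w | obsY Z R0 R1 Y0 Y1 w = true] = [set w | outcome (Z w) (V w)] by [].
rewrite condPr_given_Z AH_always_high; apply: le_Pr => // w.
by rewrite /= /always_high /outcome /out_at /rec_at /= => /andP[-> ->]; case: ifP.
Qed.

Lemma APCE_AH_eq :
  condE P (fun w => (R1 w)%:R - (R0 w)%:R) (AH Y0 Y1) =
  (pRY false - pRY true) / Pr P (AH Y0 Y1).
Proof.
have mAH := mS always_high.
rewrite /condE AH_always_high RintegralB // ?integrable_bool //.
rewrite !Rintegral_bool // !pRY_AH; congr (_ / _).
have := Pr_setIC P mAH (mS (rec_at^~ false)); have := Pr_setIC P mAH (mS (rec_at^~ true)).
rewrite /= ![[set w | _] `&` [set w | always_high _]]setIC.
lra.
Qed.

End Encouragement.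

Theorem mainTheorem7 (R : realType) (d : measure_display) (Omega : measurableType d)
  (P : probability Omega R) (Z R0 R1 Y0 Y1 : Omega -> bool)
  (mZ : measurable [set w | Z w]) (mR0 : measurable [set w | R0 w])
  (mR1 : measurable [set w | R1 w]) (mY0 : measurable [set w | Y0 w])
  (mY1 : measurable [set w | Y1 w])
  (hZ : 0 < Pr P [set w | Z w] < 1)
  (hrand : indep_Z_V P Z R0 R1 Y0 Y1)
  (hmono : {ae P, forall w, Y0 w ==> Y1 w}) :
  let pRY z := condPr P [set w | obsR Z R0 R1 w = false /\ obsY Z R0 R1 Y0 Y1 w = true]
                        [set w | Z w = z] in
  let pY z := condPr P [set w | obsY Z R0 R1 Y0 Y1 w = true] [set w | Z w = z] in
  let N_AH := pRY false - pRY true in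
  let APCE_AH := condE P (fun w => (R1 w)%:R - (R0 w)%:R) (AH Y0 Y1) in
  0 <= N_AH ->
  0 < Num.max (pRY false) (pRY true) ->
  N_AH / Num.min (pY false) (pY true) <= APCE_AH /\
  APCE_AH <= N_AH / Num.max (pRY false) (pRY true).
Proof.
move=> pRY pY N_AH APCE_AH N_AH_ge0 max_pRY_gt0.
have pRY_le z : pRY z <= Pr P (AH Y0 Y1).
  exact: (pRY_le_PrAH mZ mR0 mR1 mY0 mY1 hZ hrand hmono).
have pY_ge z : Pr P (AH Y0 Y1) <= pY z.
  exact: (PrAH_le_pY mZ mR0 mR1 mY0 mY1 hZ hrand).
have -> : APCE_AH = N_AH / Pr P (AH Y0 Y1).
  exact: (APCE_AH_eq mZ mR0 mR1 mY0 mY1 hZ hrand hmono).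
have max_pRY_le : Num.max (pRY false) (pRY true) <= Pr P (AH Y0 Y1).
  by rewrite ge_max !pRY_le.
have PrAH_gt0 := lt_le_trans max_pRY_gt0 max_pRY_le.
by split; apply: ler_wpdivl2l => //; rewrite le_min !pY_ge.
Qed.
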